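(* Let $q$ be a prime power with $q-1=ds$, $d,s$ positive integers, let $r$ be an integer with $1\le r<s$, let $h(x)\in\mathbb{F}_q[x]$, let $\xi$ be a primitive element of $\mathbb{F}_q$ and $\omega=\xi^s$. If $f(x)=x^rh(x^s)$ is a permutation polynomial of $\mathbb{F}_q$, then its inverse over $\mathbb{F}_q$ is given by $$f^{-1}(x)=\frac1d\sum_{i=0}^{d-1}\sum_{j=0}^{d-1}\omega^{i(t-jr)}\left(\frac{x}{h(\omega^i)}\right)^{\tilde r+js},$$ where $\tilde r,t\in\mathbb{Z}$ satisfy $1\le\tilde r<s$ and $r\tilde r+st=1$.
   Context: A polynomial $f\in\mathbb{F}_q[x]$ is a permutation polynomial of $\mathbb{F}_q$ if it induces a bijection of $\mathbb{F}_q$. A polynomial $g$ is the inverse of $f$ over $\mathbb{F}_q$ if $g(f(c))=c$ for all $c\in\mathbb{F}_q$. Since $d\mid q-1$, $1/d$ makes sense in $\mathbb{F}_q$. *)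

From HB Require Import structures.
From mathcomp Require Import all_boot all_order all_algebra all_field.
Set Implicit Arguments. Unset Strict Implicit. Unset Printing Implicit Defensive.
Import GRing.Theory.
Local Open Scope ring_scope.

Definition perm_poly (F : finFieldType) (f : {poly F}) : Prop :=
  bijective (fun c : F => f.[c]).

From HB Require Import structures.
From mathcomp Require Import all_boot all_order all_algebra all_field.
From mathcomp Require Import ring.
Import GRing.Theory.
Local Open Scope ring_scope.

(* Write x = f(c), w = omega^i and y = x / h(w).  The (i, j)-th term factors as
   A * z^j with A = w^t y^rt and z = y^s / w^r, and z^d = 1 because d s = q - 1
   and w^d = 1; so the sum over j is d A when z = 1 and 0 otherwise.  When
   z = 1 the Bezout relation r rt + s t = 1 gives A^r = y and A^s = w, hence
   f(A) = y h(w) = x and A = c by injectivity.  Thus only the index i with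
   omega^i = c^s survives, contributing d c. *)

Lemma expf_card_pred (F : finFieldType) (x : F) : x != 0 -> x ^+ #|F|.-1 = 1.
Proof.
move=> x0; apply: (mulfI x0); rewrite mulr1 -exprS prednK ?expf_card //.
by apply/card_gt0P; exists 0.
Qed.

Lemma sum_expr_root1_neq1 (R : idomainType) (z : R) (d : nat) :
  z ^+ d = 1 -> z != 1 -> \sum_(j < d) z ^+ j = 0.
Proof.
move=> zd z1; have : (z - 1) * (\sum_(j < d) z ^+ j) = 0 by rewrite -subrX1 zd subrr.
by move/eqP; rewrite mulf_eq0 subr_eq0 (negbTE z1) => /eqP.
Qed.

Section BezoutExponents.

Context {F : fieldType}.
Variables (r s rt : nat) (t : int).

(* When [y ^+ s = w ^+ r], this is the common root of [X^r = y] and [X^s = w]. *)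
Definition bezout_root (w y : F) : F := w ^ t * y ^+ rt.

Lemma bezout_root_factor (w y : F) (j : nat) : w != 0 ->
  w ^ (t - (j * r)%:Z) * y ^+ (rt + j * s) = bezout_root w y * (y ^+ s / w ^+ r) ^+ j.
Proof.
move=> w0; rewrite expfzDr // -exprz_inv.
change ((w ^-1) ^ ((j * r)%N)%:Z) with ((w ^-1) ^+ (j * r)).
rewrite /bezout_root exprD exprMn exprVn -!exprM exprVn -exprM (mulnC s j) (mulnC r j).
ring.
Qed.

Hypothesis bezout : r%:Z * rt%:Z + s%:Z * t = 1.

Let exprnz (a : F) (n : nat) : a ^+ n = a ^ n%:Z. Proof. by []. Qed.

Lemma bezout_root_exprr (w y : F) : w != 0 -> y != 0 -> y ^+ s = w ^+ r ->
  bezout_root w y ^+ r = y.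
Proof.
move=> w0 y0 yw; rewrite /bezout_root.
rewrite exprnz expfzMl exprzAC -exprnz -yw exprnz (exprnz y rt) !exprz_exp -expfzDr //.
by rewrite addrC (mulrC rt%:Z) bezout expr1z.
Qed.

Lemma bezout_root_exprs (w y : F) : w != 0 -> y != 0 -> y ^+ s = w ^+ r ->
  bezout_root w y ^+ s = w.
Proof.
move=> w0 y0 yw; rewrite /bezout_root.
rewrite exprnz expfzMl (exprnz y rt) !exprz_exp (mulrC rt%:Z) -exprz_exp.
rewrite -exprz_exp -(exprnz y s) yw (exprnz w r) !exprz_exp -expfzDr //.
by rewrite addrC (mulrC t) bezout expr1z.
Qed.

Lemma bezout_root_expr (c : F) : c != 0 -> bezout_root (c ^+ s) (c ^+ r) = c.
Proof.
move=> c0; rewrite /bezout_root -exprM (exprnz c (r * rt)) (exprnz c s) exprz_exp PoszM.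
by rewrite -expfzDr // addrC bezout expr1z.
Qed.

End BezoutExponents.

Arguments bezout_root_exprr {F r s rt t}.
Arguments bezout_root_exprs {F r s rt t}.

Lemma horner_Xn_comp_Xn (R : comNzRingType) (h : {poly R}) (r s : nat) (a : R) :
  ('X^r * (h \Po 'X^s)).[a] = a ^+ r * h.[a ^+ s].
Proof. by rewrite hornerM hornerXn horner_comp hornerXn. Qed.

Section InverseInnerSum.

Variables (F : finFieldType) (h : {poly F}) (d r s rt : nat) (t : int).
Hypotheses (ds_card : (d * s)%N = #|F|.-1) (r_gt0 : (0 < r)%N) (s_gt0 : (0 < s)%N)
  (rt_gt0 : (0 < rt)%N) (bezout : r%:Z * rt%:Z + s%:Z * t = 1).

Let f := 'X^r * (h \Po 'X^s).

Hypothesis f_inj : injective (fun c => f.[c]).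

Variable w : F.
Hypotheses (w_neq0 : w != 0) (w_root : w ^+ d = 1).

Let f0 : f.[0] = 0.
Proof. by rewrite horner_Xn_comp_Xn expr0n gtn_eqF // mul0r. Qed.

Lemma inverse_inner_sum_eq c : c ^+ s = w ->
  \sum_(j < d) w ^ (t - (j * r)%:Z) * (f.[c] / h.[w]) ^+ (rt + j * s) = d%:R * c.
Proof.
move=> cw; have c_neq0 : c != 0.
  by apply: contra_neq w_neq0 => c0; rewrite -cw c0 expr0n gtn_eqF.
have hw_neq0 : h.[w] != 0.
  apply: contra_neq c_neq0 => hw0; apply: f_inj.
  by rewrite /= f0 horner_Xn_comp_Xn cw hw0 mulr0.
have -> : f.[c] / h.[w] = c ^+ r by rewrite horner_Xn_comp_Xn cw mulfK.
have z1 : (c ^+ r) ^+ s / w ^+ r = 1 by rewrite -cw -!exprM mulnC divff // expf_neq0.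
under eq_bigr => j _ do rewrite bezout_root_factor // z1 expr1n mulr1.
by rewrite sumr_const card_ord -cw bezout_root_expr // mulr_natl.
Qed.

Lemma inverse_inner_sum_eq0 c : c ^+ s != w ->
  \sum_(j < d) w ^ (t - (j * r)%:Z) * (f.[c] / h.[w]) ^+ (rt + j * s) = 0.
Proof.
move=> cw; set y := f.[c] / h.[w]; set z := y ^+ s / w ^+ r.
under eq_bigr => j _ do rewrite bezout_root_factor //.
rewrite -mulr_sumr.
have [-> | y_neq0] := eqVneq y 0; first by rewrite /bezout_root expr0n gtn_eqF // mulr0 mul0r.
have [z1 | z_neq1] := eqVneq z 1; last first.
  rewrite sum_expr_root1_neq1 ?mulr0 //.
  by rewrite /z exprMn exprVn -!exprM mulnC ds_card expf_card_pred // mulnC exprM w_root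
    expr1n invr1 mulr1.
have yw : y ^+ s = w ^+ r by apply: divr1_eq.
have hw_neq0 : h.[w] != 0 by apply: contraNneq y_neq0 => hw0; rewrite /y hw0 invr0 mulr0.
have : f.[bezout_root rt t w y] = f.[c].
  rewrite horner_Xn_comp_Xn (bezout_root_exprr bezout) //.
  by rewrite (bezout_root_exprs bezout) // divfK.
move/f_inj => root_eq_c; case/eqP: cw.
by rewrite -root_eq_c (bezout_root_exprs bezout).
Qed.

End InverseInnerSum.

Theorem corollary4p5 (F : finFieldType) (q d s r : nat) (h : {poly F}) (xi : F)
  (rt : nat) (t : int) :
  #|F| = q -> q.-1 = (d * s)%N -> (0 < d)%N -> (0 < s)%N ->
  (1 <= r)%N -> (r < s)%N ->
  (q.-1).-primitive_root xi ->
  perm_poly ('X^r * (h \Po 'X^s)) ->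
  (1 <= rt)%N -> (rt < s)%N -> (r%:Z * rt%:Z + s%:Z * t = 1)%R ->
  let omega := xi ^+ s in
  forall c : F,
    let x := ('X^r * (h \Po 'X^s)).[c] in
    (d%:R)^-1 * (\sum_(i < d) \sum_(j < d)
        omega ^ (i%:Z * (t - (j * r)%:Z)) * (x / h.[omega ^+ i]) ^+ (rt + j * s))
    = c.
Proof.
move=> card_F ds d_gt0 s_gt0 r_gt0 _ xi_prim f_perm rt_gt0 _ bezout omega c x.
have f_inj := bij_inj f_perm.
have ds_card : (d * s)%N = #|F|.-1 by rewrite card_F.
have omega_prim : d.-primitive_root omega.
  by have := exp_prim_root xi_prim s; rewrite ds gcdnMl mulnK.
have omega_i_neq0 (i : nat) : omega ^+ i != 0.
  by rewrite expf_neq0 // (prim_root_eq0 omega_prim) -lt0n.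
have omega_i_root (i : nat) : (omega ^+ i) ^+ d = 1.
  by rewrite exprAC (prim_expr_order omega_prim) expr1n.
have omega_expz (i j : nat) :
    omega ^ (i%:Z * (t - (j * r)%:Z)) = (omega ^+ i) ^ (t - (j * r)%:Z).
  by rewrite -exprz_exp.
under eq_bigr => i _ do under eq_bigr => j _ do rewrite omega_expz.
have [c0 | c_neq0] := eqVneq c 0.
  rewrite [RHS]c0 big1 ?mulr0 // => i _.
  by apply: inverse_inner_sum_eq0; rewrite // c0 expr0n gtn_eqF // eq_sym.
have [k ck] : {k : 'I_d | c ^+ s = omega ^+ k}.
  by apply: (prim_rootP omega_prim); rewrite -exprM mulnC ds_card expf_card_pred.
rewrite (bigD1 k) //= inverse_inner_sum_eq // big1 ?addr0 ?mulKf //;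
  first exact: prim_root_natf_neq0 omega_prim.
move=> i ik; apply: inverse_inner_sum_eq0; rewrite // ck (eq_prim_root_expr omega_prim).
by rewrite !modn_small // eq_sym.
Qed.
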